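(* Let $f^{\pm},g^{\pm}:\mathbb{R}^2\to\mathbb{R}$ and $H:\mathbb{R}^2\times\mathbb{R}\to\mathbb{R}$ be $C^2$, and consider for $\varepsilon>0$ the Filippov system $(\dot x,\dot y)=(f^{+},g^{+})(x,y)$ if $H(x,y,\varepsilon)>0$ and $(\dot x,\dot y)=(f^{-},g^{-})(x,y)$ if $H(x,y,\varepsilon)<0$. Assume $f^-(0)=g^-(0)=0$, $H(0)=0$, $H_x(0)=0$, $H_y(0)\ne0$, $$H_y(0)g^+(0)<0,\qquad g^-_x(0)\neq0,\qquad (f^-_x(0),g^-_x(0))\ \text{not parallel to}\ (f^+(0),g^+(0)).$$ Then there exist $r>0$, $\varepsilon_0>0$ such that for each $0<\varepsilon\le\varepsilon_0$ there is a unique point $(A(\varepsilon),B(\varepsilon))\in[-r,r]^2$ with $$H(A,B,\varepsilon)=0,\qquad H_x(A,B,\varepsilon)f^-(A,B)+H_y(A,B,\varepsilon)g^-(A,B)=0,$$ and $\varepsilon\mapsto(A(\varepsilon),B(\varepsilon))$ is $C^1$ with $(A(0),B(0))=(0,0)$. Moreover: 1) $(A'(0),B'(0))=\dfrac{H_\varepsilon(0)}{H_y(0)}\Big(\dfrac{g^-_y(0)}{g^-_x(0)},-1\Big)$. 2) $L\setminus\{(A(\varepsilon),B(\varepsilon))\}=L_{sliding}\cup L_{crossing}$, where $L=\{(x,y)\in[-r,r]^2:H(x,y,\varepsilon)=0\}$, $L_{sliding}=\{(x,y)\in L: H_xf^-+H_yg^->0\}$, $L_{crossing}=\{(x,y)\in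 L: H_xf^-+H_yg^-<0\}$ (with $H_x,H_y$ evaluated at $(x,y,\varepsilon)$ and $f^-,g^-$ at $(x,y)$). 3) The system $f^-(a,b)-\lambda f^+(a,b)=0$, $g^-(a,b)-\lambda g^+(a,b)=0$, $H(a,b,\varepsilon)=0$ has, near $(0,0,0)$, a unique $C^1$ solution $(a(\varepsilon),b(\varepsilon),\lambda(\varepsilon))$ with $(a,b,\lambda)(0)=0$, and $$(a'(0),b'(0),\lambda'(0))=\frac{H_\varepsilon(0)}{H_y(0)}\left(\frac{f^-_y(0)g^+(0)-g^-_y(0)f^+(0)}{f^-_x(0)g^+(0)-g^-_x(0)f^+(0)},\,-1,\,-\frac{f^-_x(0)g^-_y(0)-f^-_y(0)g^-_x(0)}{f^-_x(0)g^+(0)-g^-_x(0)f^+(0)}\right).$$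
   Context: Subscripts denote partial derivatives; ''$(0)$'' means evaluation at the origin (and $\varepsilon=0$ for $H$). The solutions $(a(\varepsilon),b(\varepsilon))$ of the system in 3) are the equilibria (pseudo-equilibria) of the Filippov sliding vector field on the switching curve $\{H=0\}$. *)

From Stdlib Require Export Reals.
Open Scope R_scope.

Definition cont2 (f : R -> R -> R) : Prop :=
  forall x y eps, 0 < eps -> exists d, 0 < d /\
    forall x' y', Rabs (x' - x) < d -> Rabs (y' - y) < d ->
      Rabs (f x' y' - f x y) < eps.

Definition cont3 (f : R -> R -> R -> R) : Prop :=
  forall x y z eps, 0 < eps -> exists d, 0 < d /\
    forall x' y' z', Rabs (x' - x) < d -> Rabs (y' - y) < d -> Rabs (z' - z) < d ->
      Rabs (f x' y' z' - f x y z) < eps.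

Definition is_dx2 (f fx : R -> R -> R) : Prop :=
  forall x y, derivable_pt_lim (fun t => f t y) x (fx x y).
Definition is_dy2 (f fy : R -> R -> R) : Prop :=
  forall x y, derivable_pt_lim (fun t => f x t) y (fy x y).

Definition is_dx3 (f fx : R -> R -> R -> R) : Prop :=
  forall x y z, derivable_pt_lim (fun t => f t y z) x (fx x y z).
Definition is_dy3 (f fy : R -> R -> R -> R) : Prop :=
  forall x y z, derivable_pt_lim (fun t => f x t z) y (fy x y z).
Definition is_dz3 (f fz : R -> R -> R -> R) : Prop :=
  forall x y z, derivable_pt_lim (fun t => f x y t) z (fz x y z).

Definition C1_2 (f : R -> R -> R) : Prop :=
  cont2 f /\ exists fx fy, is_dx2 f fx /\ is_dy2 f fy /\ cont2 fx /\ cont2 fy.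
Definition C2_2 (f : R -> R -> R) : Prop :=
  cont2 f /\ exists fx fy, is_dx2 f fx /\ is_dy2 f fy /\ C1_2 fx /\ C1_2 fy.

Definition C1_3 (f : R -> R -> R -> R) : Prop :=
  cont3 f /\ exists fx fy fz, is_dx3 f fx /\ is_dy3 f fy /\ is_dz3 f fz /\
    cont3 fx /\ cont3 fy /\ cont3 fz.
Definition C2_3 (f : R -> R -> R -> R) : Prop :=
  cont3 f /\ exists fx fy fz, is_dx3 f fx /\ is_dy3 f fy /\ is_dz3 f fz /\
    C1_3 fx /\ C1_3 fy /\ C1_3 fz.

Definition C1_near0 (d : R) (u du : R -> R) : Prop :=
  forall e, Rabs e <= d -> derivable_pt_lim u e (du e) /\ continuity_pt du e.

(* The switching curve [H = 0] is, near the origin, a graph [y = phi(x, eps)] by the implicit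
   function theorem ([Hy(0) <> 0]).  On this graph both problems become a scalar equation
   [G(x, eps) = 0]: for the tangency point [G = Hx fm + Hy gm], for the pseudo-equilibrium
   [G = fm gp - gm fp] (the fields are parallel, and then [lambda = gm / gp] since
   [gp(0) <> 0]).  In both cases [G(0, 0) = 0] and [dG/dx(0, 0)] is [Hy gmx] resp. the
   non-parallelism determinant, so a second use of the implicit function theorem gives a C^1
   branch [x = A(eps)], whose slope at 0 is [-G_eps / G_x]; the formulas follow by evaluating
   at the origin, where [fm = gm = Hx = 0].  Uniqueness of the zero makes every other point of
   the curve a strict sliding or crossing point.
   The implicit function theorem itself is proved by hand: strict monotonicity in [y] and the
   intermediate value theorem give existence, uniqueness and continuity of the root, and the
   mean value theorem in each variable gives its derivative. *)

From Stdlib Require Import Reals Lra Psatz ClassicalEpsilon FunctionalExtensionality.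
Open Scope R_scope.

Lemma Rabs_le_bounds x a : Rabs x <= a -> - a <= x <= a.
Proof.
  intro hx; split; [|exact (Rle_trans _ _ _ (RRle_abs x) hx)].
  rewrite <- Rabs_Ropp in hx; pose proof (RRle_abs (- x)); lra.
Qed.

Lemma Rabs_bounds x : - Rabs x <= x <= Rabs x.
Proof. apply Rabs_le_bounds, Rle_refl. Qed.

Ltac solve_abs :=
  repeat match goal with
  | h : Rabs _ < _ |- _ => apply Rabs_def2 in h; destruct h
  | h : Rabs _ <= _ |- _ => apply Rabs_le_bounds in h; destruct h
  end;
  try match goal with
  | |- Rabs _ < _ => apply Rabs_def1
  | |- Rabs _ <= _ => apply Rabs_le; split
  end; lra.

Definition cont2_at (f : R -> R -> R) (x y : R) : Prop :=
  forall eps, 0 < eps -> exists d, 0 < d /\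
    forall x' y', Rabs (x' - x) < d -> Rabs (y' - y) < d ->
      Rabs (f x' y' - f x y) < eps.

Definition cont3_at (f : R -> R -> R -> R) (x y z : R) : Prop :=
  forall eps, 0 < eps -> exists d, 0 < d /\
    forall x' y' z', Rabs (x' - x) < d -> Rabs (y' - y) < d -> Rabs (z' - z) < d ->
      Rabs (f x' y' z' - f x y z) < eps.

Lemma cont2_at_fst x y : cont2_at (fun a _ => a) x y.
Proof. intros e he; exists e; split; auto. Qed.

Lemma cont2_at_snd x y : cont2_at (fun _ b => b) x y.
Proof. intros e he; exists e; split; auto. Qed.

Lemma cont2_at_comp2 (h f g : R -> R -> R) x y :
  cont2_at h (f x y) (g x y) -> cont2_at f x y -> cont2_at g x y ->
  cont2_at (fun a b => h (f a b) (g a b)) x y.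
Proof.
  intros Ch Cf Cg e he. destruct (Ch e he) as [d1 [hd1 H1]].
  destruct (Cf d1 hd1) as [d2 [hd2 H2]]. destruct (Cg d1 hd1) as [d3 [hd3 H3]].
  exists (Rmin d2 d3); split; [apply Rmin_pos; auto|].
  intros x' y' h1 h2. pose proof (Rmin_l d2 d3); pose proof (Rmin_r d2 d3).
  apply H1; [apply H2|apply H3]; lra.
Qed.

Lemma cont2_at_comp3 (h : R -> R -> R -> R) (f g k : R -> R -> R) x y :
  cont3_at h (f x y) (g x y) (k x y) -> cont2_at f x y -> cont2_at g x y -> cont2_at k x y ->
  cont2_at (fun a b => h (f a b) (g a b) (k a b)) x y.
Proof.
  intros Ch Cf Cg Ck e he. destruct (Ch e he) as [d1 [hd1 H1]].
  destruct (Cf d1 hd1) as [d2 [hd2 H2]]. destruct (Cg d1 hd1) as [d3 [hd3 H3]].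
  destruct (Ck d1 hd1) as [d4 [hd4 H4]].
  exists (Rmin d2 (Rmin d3 d4)); split; [repeat apply Rmin_pos; auto|].
  intros x' y' h1 h2.
  pose proof (Rmin_l d2 (Rmin d3 d4)); pose proof (Rmin_r d2 (Rmin d3 d4));
  pose proof (Rmin_l d3 d4); pose proof (Rmin_r d3 d4).
  apply H1; [apply H2|apply H3|apply H4]; lra.
Qed.

Lemma cont2_at_Rplus a b : cont2_at Rplus a b.
Proof.
  intros e he; exists (e / 2); split; [lra|]; intros x' y' h1 h2.
  replace (x' + y' - (a + b)) with ((x' - a) + (y' - b)) by ring.
  eapply Rle_lt_trans; [apply Rabs_triang|lra].
Qed.

Lemma cont2_at_Rmult a b : cont2_at Rmult a b.
Proof.
  intros e he.
  set (K := 1 + Rabs a + Rabs b).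
  assert (hK : 0 < K) by (unfold K; pose proof (Rabs_pos a); pose proof (Rabs_pos b); lra).
  exists (Rmin 1 (e / K)); split; [apply Rmin_pos; [lra|apply Rdiv_lt_0_compat; auto]|].
  intros x' y' h1 h2.
  pose proof (Rmin_l 1 (e / K)); pose proof (Rmin_r 1 (e / K)).
  set (d := Rmin 1 (e / K)) in *.
  assert (hdK : d * K <= e).
  { assert (e / K * K = e) by (field; lra).
    apply Rle_trans with (e / K * K); [apply Rmult_le_compat_r|]; lra. }
  (* |x'y' - ab| <= |x'-a||y'-b| + |x'-a||b| + |a||y'-b| <= d (1 + |b| + |a|) *)
  replace (x' * y' - a * b) with ((x' - a) * (y' - b) + (x' - a) * b + a * (y' - b)) by ring.
  pose proof (Rabs_triang ((x' - a) * (y' - b) + (x' - a) * b) (a * (y' - b))).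
  pose proof (Rabs_triang ((x' - a) * (y' - b)) ((x' - a) * b)).
  rewrite !Rabs_mult in *.
  pose proof (Rabs_pos (x' - a)); pose proof (Rabs_pos (y' - b));
  pose proof (Rabs_pos a); pose proof (Rabs_pos b).
  unfold K in hdK. nra.
Qed.

Lemma cont2_at_of_continuity_pt (u : R -> R) a b :
  continuity_pt u a -> cont2_at (fun x _ => u x) a b.
Proof.
  intros Cu e he. destruct (Cu e he) as [d [hd Hd]]. exists d; split; auto.
  intros x' y' h1 _. destruct (Req_dec x' a) as [->|ne].
  - rewrite Rminus_diag, Rabs_R0; auto.
  - apply (Hd x'). split; [split; [exact I|auto]|exact h1].
Qed.

Lemma continuity_pt_of_cont2_at (u : R -> R) a b :
  cont2_at (fun x _ => u x) a b -> continuity_pt u a.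
Proof.
  intros Cu e he. destruct (Cu e he) as [d [hd Hd]]. exists d; split; auto.
  intros x [_ hx]. apply (Hd x b hx). rewrite Rminus_diag, Rabs_R0; auto.
Qed.

Lemma cont2_at_plus f g x y :
  cont2_at f x y -> cont2_at g x y -> cont2_at (fun a b => f a b + g a b) x y.
Proof. intros; apply (cont2_at_comp2 Rplus); auto; apply cont2_at_Rplus. Qed.

Lemma cont2_at_mult f g x y :
  cont2_at f x y -> cont2_at g x y -> cont2_at (fun a b => f a b * g a b) x y.
Proof. intros; apply (cont2_at_comp2 Rmult); auto; apply cont2_at_Rmult. Qed.

Lemma cont2_at_opp f x y : cont2_at f x y -> cont2_at (fun a b => - f a b) x y.
Proof.
  intros C e he. destruct (C e he) as [d [hd Hd]]. exists d; split; auto.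
  intros. replace (- f x' y' - - f x y) with (- (f x' y' - f x y)) by ring.
  rewrite Rabs_Ropp; auto.
Qed.

Lemma cont2_at_minus f g x y :
  cont2_at f x y -> cont2_at g x y -> cont2_at (fun a b => f a b - g a b) x y.
Proof. intros; apply (cont2_at_plus f (fun a b => - g a b)); auto; apply cont2_at_opp; auto. Qed.

Lemma cont2_at_div f g x y :
  cont2_at f x y -> cont2_at g x y -> g x y <> 0 -> cont2_at (fun a b => f a b / g a b) x y.
Proof.
  intros Cf Cg gnz. apply cont2_at_mult; auto.
  apply (cont2_at_comp2 (fun u _ => / u) g g); auto.
  apply cont2_at_of_continuity_pt, (continuity_pt_inv (fun u => u)); auto.
  apply derivable_continuous_pt, derivable_pt_id.
Qed.

Lemma cont2_at_cont2_comp h f g x y : cont2 h -> cont2_at f x y -> cont2_at g x y ->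
  cont2_at (fun a b => h (f a b) (g a b)) x y.
Proof. intros Ch; apply cont2_at_comp2; exact (Ch _ _). Qed.

Lemma cont2_at_cont3_comp h f g k x y :
  cont3 h -> cont2_at f x y -> cont2_at g x y -> cont2_at k x y ->
  cont2_at (fun a b => h (f a b) (g a b) (k a b)) x y.
Proof. intros Ch; apply cont2_at_comp3; exact (Ch _ _ _). Qed.

Lemma cont2_at_comp_diag (K : R -> R -> R) (A : R -> R) t :
  cont2_at K (A t) t -> continuity_pt A t -> cont2_at (fun s _ => K (A s) s) t 0.
Proof.
  intros CK CA. apply (cont2_at_comp2 K (fun s _ => A s) (fun s _ => s)); auto.
  - apply cont2_at_of_continuity_pt; auto.
  - apply cont2_at_fst.
Qed.

Lemma continuity_pt_comp_diag (K : R -> R -> R) (A : R -> R) t :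
  cont2_at K (A t) t -> continuity_pt A t -> continuity_pt (fun s => K (A s) s) t.
Proof. intros; apply (continuity_pt_of_cont2_at _ t 0), cont2_at_comp_diag; auto. Qed.

Lemma cont2_at_swap (f : R -> R -> R) x y : cont2_at f y x -> cont2_at (fun a b => f b a) x y.
Proof. intros C e he. destruct (C e he) as [d [hd Hd]]. exists d; split; auto. Qed.

Lemma cont3_at_of_cont2_at (f : R -> R -> R) u v y :
  cont2_at f y u -> cont3_at (fun a _ c => f c a) u v y.
Proof. intros C e he. destruct (C e he) as [d [hd Hd]]. exists d; split; auto. Qed.

Lemma cont3_at_swap23 (f : R -> R -> R -> R) x y z : cont3 f -> cont3_at (fun a b c => f a c b) x y z.
Proof. intros C e he. destruct (C x z y e he) as [d [hd Hd]]. exists d; split; auto. Qed.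

Lemma cont3_at_rotate (f : R -> R -> R -> R) x y z : cont3 f -> cont3_at (fun a b c => f b c a) x y z.
Proof. intros C e he. destruct (C y z x e he) as [d [hd Hd]]. exists d; split; auto. Qed.

Lemma cont2_fix3 (f : R -> R -> R -> R) z : cont3 f -> cont2 (fun a b => f a b z).
Proof.
  intros C x y e he. destruct (C x y z e he) as [d [hd Hd]]. exists d; split; auto.
  intros. apply Hd; auto. rewrite Rminus_diag, Rabs_R0; auto.
Qed.

Lemma cont2_fix1 (f : R -> R -> R -> R) c : cont3 f -> cont2 (fun a b => f c a b).
Proof.
  intros C x y e he. destruct (C c x y e he) as [d [hd Hd]]. exists d; split; auto.
  intros. apply Hd; auto. rewrite Rminus_diag, Rabs_R0; auto.
Qed.

Ltac cont2_at_auto leaf :=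
  repeat first
    [ leaf
    | apply cont2_at_plus | apply cont2_at_minus | apply cont2_at_mult | apply cont2_at_opp
    | apply cont2_at_fst | apply cont2_at_snd
    | apply cont2_at_cont3_comp; [assumption| | | ]
    | apply cont2_at_cont2_comp; [assumption| | ] ].

Lemma cont3_at_opp F x y z : cont3_at F x y z -> cont3_at (fun a b c => - F a b c) x y z.
Proof.
  intros C e he. destruct (C e he) as [d [hd Hd]]. exists d; split; auto.
  intros. replace (- F x' y' z' - - F x y z) with (- (F x' y' z' - F x y z)) by ring.
  rewrite Rabs_Ropp; auto.
Qed.

Lemma cont3_at_pos_near F u v y : cont3_at F u v y -> 0 < F u v y ->
  exists d, 0 < d /\ forall u' v', Rabs (u' - u) < d -> Rabs (v' - v) < d -> 0 < F u' v' y.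
Proof.
  intros C pos. destruct (C _ pos) as [d [hd Hd]]. exists d; split; auto.
  intros u' v' hu hv.
  assert (Rabs (F u' v' y - F u v y) < F u v y) by (apply Hd; rewrite ?Rminus_diag, ?Rabs_R0; auto).
  solve_abs.
Qed.

Lemma cont2_nonzero_near (f : R -> R -> R) : cont2 f -> f 0 0 <> 0 ->
  exists d, 0 < d /\ forall x y, Rabs x < d -> Rabs y < d -> f x y <> 0.
Proof.
  intros C f0. destruct (C 0 0 (Rabs (f 0 0))) as [d [hd Hd]]; [apply Rabs_pos_lt; auto|].
  exists d; split; auto. intros x y hx hy z.
  assert (hlt : Rabs (f x y - f 0 0) < Rabs (f 0 0)) by (apply Hd; rewrite Rminus_0_r; auto).
  rewrite z, Rminus_0_l, Rabs_Ropp in hlt; lra.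
Qed.

Definition lim_at0 (f : R -> R) (l : R) : Prop :=
  forall eps, 0 < eps -> exists d, 0 < d /\
    forall h, h <> 0 -> Rabs h < d -> Rabs (f h - l) < eps.

Lemma lim_at0_const c : lim_at0 (fun _ => c) c.
Proof. intros e he; exists 1; split; [lra|]; intros; rewrite Rminus_diag, Rabs_R0; lra. Qed.

Lemma lim_at0_shift u : lim_at0 (fun h => u + h) u.
Proof. intros e he; exists e; split; auto; intros. replace (u + h - u) with h by ring; auto. Qed.

Lemma lim_at0_comp2 h f g a b : cont2_at h a b -> lim_at0 f a -> lim_at0 g b ->
  lim_at0 (fun t => h (f t) (g t)) (h a b).
Proof.
  intros Ch Lf Lg e he. destruct (Ch e he) as [d1 [hd1 H1]].
  destruct (Lf d1 hd1) as [d2 [hd2 H2]]. destruct (Lg d1 hd1) as [d3 [hd3 H3]].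
  exists (Rmin d2 d3); split; [apply Rmin_pos; auto|].
  intros t ht1 ht2. pose proof (Rmin_l d2 d3); pose proof (Rmin_r d2 d3).
  apply H1; [apply H2|apply H3]; auto; lra.
Qed.

Lemma lim_at0_comp3 h f g k a b c : cont3_at h a b c -> lim_at0 f a -> lim_at0 g b -> lim_at0 k c ->
  lim_at0 (fun t => h (f t) (g t) (k t)) (h a b c).
Proof.
  intros Ch Lf Lg Lk e he. destruct (Ch e he) as [d1 [hd1 H1]].
  destruct (Lf d1 hd1) as [d2 [hd2 H2]]. destruct (Lg d1 hd1) as [d3 [hd3 H3]].
  destruct (Lk d1 hd1) as [d4 [hd4 H4]].
  exists (Rmin d2 (Rmin d3 d4)); split; [repeat apply Rmin_pos; auto|].
  intros t ht1 ht2.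
  pose proof (Rmin_l d2 (Rmin d3 d4)); pose proof (Rmin_r d2 (Rmin d3 d4));
  pose proof (Rmin_l d3 d4); pose proof (Rmin_r d3 d4).
  apply H1; [apply H2|apply H3|apply H4]; auto; lra.
Qed.

Lemma lim_at0_ext_near f g l d0 : 0 < d0 ->
  (forall t, t <> 0 -> Rabs t < d0 -> f t = g t) -> lim_at0 f l -> lim_at0 g l.
Proof.
  intros hd0 E Lf e he. destruct (Lf e he) as [d [hd Hd]].
  exists (Rmin d d0); split; [apply Rmin_pos; auto|].
  intros t h1 h2. pose proof (Rmin_l d d0); pose proof (Rmin_r d d0).
  rewrite <- E by (auto; lra). apply Hd; auto; lra.
Qed.

Lemma lim_at0_squeeze f g a d0 : 0 < d0 ->
  (forall t, t <> 0 -> Rabs t < d0 -> Rabs (f t - a) <= Rabs (g t - a)) ->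
  lim_at0 g a -> lim_at0 f a.
Proof.
  intros hd0 E Lg e he. destruct (Lg e he) as [d [hd Hd]].
  exists (Rmin d d0); split; [apply Rmin_pos; auto|].
  intros t h1 h2. pose proof (Rmin_l d d0); pose proof (Rmin_r d d0).
  eapply Rle_lt_trans; [apply E; auto; lra|apply Hd; auto; lra].
Qed.

Lemma lim_at0_continuity_pt u x : continuity_pt u x -> lim_at0 (fun h => u (x + h)) (u x).
Proof.
  intro Cu. apply (lim_at0_comp2 (fun a _ => u a) (fun h => x + h) (fun h => x + h) x x).
  - apply cont2_at_of_continuity_pt; auto.
  - apply lim_at0_shift.
  - apply lim_at0_shift.
Qed.

Lemma derivable_pt_lim_iff_lim_at0 f x l :
  derivable_pt_lim f x l <-> lim_at0 (fun h => (f (x + h) - f x) / h) l.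
Proof.
  split.
  - intros D e he. destruct (D e he) as [d Hd]. exists d; split; [apply cond_pos|auto].
  - intros L e he. destruct (L e he) as [d [hd Hd]]. exists (mkposreal d hd); auto.
Qed.

Lemma derivable_pt_lim_eq_value f x l l' : derivable_pt_lim f x l -> l = l' -> derivable_pt_lim f x l'.
Proof. intros; subst; auto. Qed.

Lemma derivable_pt_lim_add f g x a b : derivable_pt_lim f x a -> derivable_pt_lim g x b ->
  derivable_pt_lim (fun t => f t + g t) x (a + b).
Proof. intros; apply (derivable_pt_lim_plus f g); auto. Qed.

Lemma derivable_pt_lim_sub f g x a b : derivable_pt_lim f x a -> derivable_pt_lim g x b ->
  derivable_pt_lim (fun t => f t - g t) x (a - b).
Proof. intros; apply (derivable_pt_lim_minus f g); auto. Qed.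

Lemma derivable_pt_lim_mul f g x a b : derivable_pt_lim f x a -> derivable_pt_lim g x b ->
  derivable_pt_lim (fun t => f t * g t) x (a * g x + f x * b).
Proof. intros; apply (derivable_pt_lim_mult f g); auto. Qed.

Lemma derivable_pt_lim_quot f g x a b : derivable_pt_lim f x a -> derivable_pt_lim g x b ->
  g x <> 0 -> derivable_pt_lim (fun t => f t / g t) x ((a * g x - b * f x) / (g x)²).
Proof. intros; apply (derivable_pt_lim_div f g); auto. Qed.

(** * Mean values and the chain rule *)

Lemma choice_near {A : Type} (a0 : A) (P : R -> Prop) (Q : R -> A -> Prop) :
  (forall h, P h -> exists c, Q h c) -> exists c : R -> A, forall h, P h -> Q h (c h).
Proof.
  intro HQ. exists (fun h => epsilon (inhabits a0) (fun c => P h -> Q h c)).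
  intros h Ph. apply (epsilon_spec (inhabits a0) (fun c => P h -> Q h c)); [|exact Ph].
  destruct (HQ h Ph) as [c Hc]. exists c; auto.
Qed.

Lemma between_abs a b c : Rmin a b <= c <= Rmax a b -> Rabs (c - a) <= Rabs (b - a).
Proof.
  intros [h1 h2]. unfold Rmin, Rmax in *.
  destruct (Rle_dec a b); unfold Rabs; repeat destruct Rcase_abs; lra.
Qed.

Lemma between_bound a b c r : Rmin a b <= c <= Rmax a b -> Rabs a < r -> Rabs b < r -> Rabs c < r.
Proof. unfold Rmin, Rmax; destruct (Rle_dec a b); intros; solve_abs. Qed.

Lemma mean_value f f' a b :
  (forall c, Rmin a b <= c <= Rmax a b -> derivable_pt_lim f c (f' c)) ->
  exists c, Rmin a b <= c <= Rmax a b /\ f b - f a = f' c * (b - a).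
Proof.
  intros D. destruct (Rtotal_order a b) as [lt|[<-|gt]].
  - rewrite Rmin_left, Rmax_right in * by lra.
    destruct (MVT_cor2 f f' a b lt D) as [c [E hc]]. exists c; split; [lra|auto].
  - exists a. rewrite Rmin_left, Rmax_left by lra. split; [lra|ring].
  - rewrite Rmin_right, Rmax_left in * by lra.
    destruct (MVT_cor2 f f' b a gt D) as [c [E hc]].
    exists c; split; [lra|]. replace (f b - f a) with (- (f a - f b)) by ring. rewrite E; ring.
Qed.

Lemma mean_value2 (g g1 g2 : R -> R -> R) a b a' b' :
  (forall c, Rmin a a' <= c <= Rmax a a' -> derivable_pt_lim (fun s => g s b') c (g1 c b')) ->
  (forall c, Rmin b b' <= c <= Rmax b b' -> derivable_pt_lim (fun s => g a s) c (g2 a c)) ->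
  exists xi eta, Rmin a a' <= xi <= Rmax a a' /\ Rmin b b' <= eta <= Rmax b b' /\
    g a' b' - g a b = g1 xi b' * (a' - a) + g2 a eta * (b' - b).
Proof.
  intros D1 D2.
  destruct (mean_value (fun s => g s b') (fun c => g1 c b') a a' D1) as [xi [hxi E1]].
  destruct (mean_value (fun s => g a s) (fun c => g2 a c) b b' D2) as [eta [heta E2]].
  exists xi, eta; split; [|split]; auto.
  replace (g a' b' - g a b) with ((g a' b' - g a b') + (g a b' - g a b)) by ring.
  rewrite E1, E2; ring.
Qed.

Lemma derivable_pt_lim_comp2 (g g1 g2 : R -> R -> R) al be al' be' t rho :
  0 < rho ->
  derivable_pt_lim al t al' -> derivable_pt_lim be t be' ->
  (forall a b, Rabs (a - al t) < rho -> Rabs (b - be t) < rho ->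
     derivable_pt_lim (fun s => g s b) a (g1 a b)) ->
  (forall a b, Rabs (a - al t) < rho -> Rabs (b - be t) < rho ->
     derivable_pt_lim (fun s => g a s) b (g2 a b)) ->
  cont2_at g1 (al t) (be t) -> cont2_at g2 (al t) (be t) ->
  derivable_pt_lim (fun s => g (al s) (be s)) t
    (g1 (al t) (be t) * al' + g2 (al t) (be t) * be').
Proof.
  intros hrho Da Db D1 D2 C1 C2.
  assert (Ca := derivable_continuous_pt al t (exist _ al' Da)).
  assert (Cb := derivable_continuous_pt be t (exist _ be' Db)).
  destruct (lim_at0_continuity_pt al t Ca rho hrho) as [da [hda Ha]].
  destruct (lim_at0_continuity_pt be t Cb rho hrho) as [db [hdb Hb]].
  set (d0 := Rmin da db).
  assert (hd0 : 0 < d0) by (apply Rmin_pos; auto).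
  destruct (choice_near (0, 0) (fun h => h <> 0 /\ Rabs h < d0) (fun h c =>
      Rabs (fst c - al t) <= Rabs (al (t + h) - al t) /\
      Rabs (snd c - be t) <= Rabs (be (t + h) - be t) /\
      g (al (t + h)) (be (t + h)) - g (al t) (be t) =
        g1 (fst c) (be (t + h)) * (al (t + h) - al t) + g2 (al t) (snd c) * (be (t + h) - be t)))
    as [c Hc].
  { intros h [h0 hh]. pose proof (Rmin_l da db); pose proof (Rmin_r da db).
    assert (na : Rabs (al (t + h) - al t) < rho) by (apply Ha; auto; unfold d0 in *; lra).
    assert (nb : Rabs (be (t + h) - be t) < rho) by (apply Hb; auto; unfold d0 in *; lra).
    destruct (mean_value2 g g1 g2 (al t) (be t) (al (t + h)) (be (t + h))) as (xi & eta & hxi & heta & E).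
    - intros x hx. apply D1; auto. pose proof (between_abs _ _ _ hx); lra.
    - intros y hy. apply D2; [rewrite Rminus_diag, Rabs_R0; auto|].
      pose proof (between_abs _ _ _ hy); lra.
    - exists (xi, eta); simpl. split; [|split]; auto; apply between_abs; auto. }
  apply derivable_pt_lim_iff_lim_at0.
  apply (lim_at0_ext_near (fun h => g1 (fst (c h)) (be (t + h)) * ((al (t + h) - al t) / h)
                                 + g2 (al t) (snd (c h)) * ((be (t + h) - be t) / h)) _ _ d0 hd0).
  { intros h h0 hh. destruct (Hc h (conj h0 hh)) as (_ & _ & E). rewrite E. field; auto. }
  apply (lim_at0_comp2 Rplus); [apply cont2_at_Rplus| |];
    apply (lim_at0_comp2 Rmult); try apply cont2_at_Rmult.
  - apply lim_at0_comp2; auto.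
    + apply (lim_at0_squeeze _ (fun h => al (t + h)) _ d0 hd0); [|apply lim_at0_continuity_pt; auto].
      intros h h0 hh. apply (Hc h (conj h0 hh)).
    + apply lim_at0_continuity_pt; auto.
  - apply derivable_pt_lim_iff_lim_at0; auto.
  - apply (lim_at0_comp2 g2 (fun _ => al t)); auto; [apply lim_at0_const|].
    apply (lim_at0_squeeze _ (fun h => be (t + h)) _ d0 hd0); [|apply lim_at0_continuity_pt; auto].
    intros h h0 hh. apply (Hc h (conj h0 hh)).
  - apply derivable_pt_lim_iff_lim_at0; auto.
Qed.

Lemma derivable_pt_lim_comp2_global (g g1 g2 : R -> R -> R) al be al' be' t :
  (forall a b, derivable_pt_lim (fun s => g s b) a (g1 a b)) ->
  (forall a b, derivable_pt_lim (fun s => g a s) b (g2 a b)) ->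
  cont2 g1 -> cont2 g2 ->
  derivable_pt_lim al t al' -> derivable_pt_lim be t be' ->
  derivable_pt_lim (fun s => g (al s) (be s)) t
    (g1 (al t) (be t) * al' + g2 (al t) (be t) * be').
Proof.
  intros D1 D2 C1 C2 Da Db.
  apply (derivable_pt_lim_comp2 g g1 g2 al be al' be' t 1); auto; [lra|exact (C1 _ _)|exact (C2 _ _)].
Qed.

(** * The implicit function theorem *)

(* Stdlib's [IVT] wants a function continuous everywhere; composing with [clamp] provides one. *)
Definition clamp lo hi t := Rmax lo (Rmin hi t).

Lemma clamp_id lo hi t : lo <= t <= hi -> clamp lo hi t = t.
Proof. intros; unfold clamp, Rmax, Rmin; repeat destruct Rle_dec; lra. Qed.

Lemma clamp_range lo hi t : lo <= hi -> lo <= clamp lo hi t <= hi.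
Proof. intros; unfold clamp, Rmax, Rmin; repeat destruct Rle_dec; lra. Qed.

Lemma continuity_clamp lo hi x : continuity_pt (clamp lo hi) x.
Proof.
  intros e he. exists e; split; auto. intros y [_ hy]. simpl in *. unfold R_dist in *.
  eapply Rle_lt_trans; [|exact hy].
  unfold clamp, Rmax, Rmin. repeat destruct Rle_dec; unfold Rabs; repeat destruct Rcase_abs; lra.
Qed.

Section IncreasingInY.

Variables (F Fy : R -> R -> R -> R) (r : R).
Hypothesis F_dy : forall u v y, Rabs u <= r -> Rabs v <= r -> Rabs y <= r ->
  derivable_pt_lim (fun t => F u v t) y (Fy u v y).
Hypothesis Fy_pos : forall u v y, Rabs u <= r -> Rabs v <= r -> Rabs y <= r -> 0 < Fy u v y.
Hypothesis F_cont : forall u v y, Rabs u <= r -> Rabs v <= r -> Rabs y <= r -> cont3_at F u v y.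

Lemma increasing_in_y u v y1 y2 : Rabs u <= r -> Rabs v <= r -> - r <= y1 -> y1 < y2 -> y2 <= r ->
  F u v y1 < F u v y2.
Proof.
  intros hu hv h1 h2 h3.
  destruct (MVT_cor2 (fun t => F u v t) (fun t => Fy u v t) y1 y2 h2) as [z [E hz]].
  { intros z hz. apply F_dy; auto; solve_abs. }
  assert (0 < Fy u v z) by (apply Fy_pos; auto; solve_abs).
  assert (0 < Fy u v z * (y2 - y1)) by (apply Rmult_lt_0_compat; lra). lra.
Qed.

Lemma root_in_y_unique u v y1 y2 : Rabs u <= r -> Rabs v <= r -> Rabs y1 <= r -> Rabs y2 <= r ->
  F u v y1 = 0 -> F u v y2 = 0 -> y1 = y2.
Proof.
  intros hu hv h1 h2 E1 E2. apply Rabs_le_bounds in h1, h2.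
  destruct (Rtotal_order y1 y2) as [lt|[eq|gt]]; auto.
  - assert (F u v y1 < F u v y2) by (apply increasing_in_y; lra). lra.
  - assert (F u v y2 < F u v y1) by (apply increasing_in_y; lra). lra.
Qed.

Lemma root_in_y_between u v a b : Rabs u <= r -> Rabs v <= r -> - r <= a -> a < b -> b <= r ->
  F u v a < 0 -> 0 < F u v b -> exists y, a < y < b /\ F u v y = 0.
Proof.
  intros hu hv ha hab hb Fa Fb.
  destruct (IVT (fun t => F u v (clamp a b t)) a b) as [y [hy Ey]];
    rewrite ?clamp_id by lra; auto.
  - intro t. apply (continuity_pt_comp (clamp a b) (fun y => F u v y)); [apply continuity_clamp|].
    apply derivable_continuous_pt. exists (Fy u v (clamp a b t)).
    pose proof (clamp_range a b t). apply F_dy; auto; solve_abs.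
  - rewrite clamp_id in Ey by lra.
    exists y; split; auto.
    split; apply Rnot_le_lt; intro; [assert (y = a) by lra|assert (y = b) by lra]; subst; lra.
Qed.

(* The sign change of [F u0 v0] across [y0] survives small changes of [(u, v)]. *)
Lemma root_in_y_persists u0 v0 y0 e : Rabs u0 < r -> Rabs v0 < r -> F u0 v0 y0 = 0 ->
  0 < e -> Rabs y0 + e <= r ->
  exists d, 0 < d /\ forall u v, Rabs (u - u0) < d -> Rabs (v - v0) < d ->
    exists y, Rabs (y - y0) < e /\ F u v y = 0.
Proof.
  intros hu0 hv0 E0 he hy0.
  pose proof (Rabs_bounds y0); pose proof (Rabs_bounds u0); pose proof (Rabs_bounds v0).
  assert (pos : 0 < F u0 v0 (y0 + e)) by (rewrite <- E0; apply increasing_in_y; lra).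
  assert (neg : 0 < - F u0 v0 (y0 - e)).
  { assert (F u0 v0 (y0 - e) < F u0 v0 y0) by (apply increasing_in_y; lra). lra. }
  destruct (cont3_at_pos_near F u0 v0 (y0 + e)) as [dp [hdp Hp]]; auto.
  { apply F_cont; solve_abs. }
  destruct (cont3_at_pos_near (fun u v y => - F u v y) u0 v0 (y0 - e)) as [dn [hdn Hn]]; auto.
  { apply cont3_at_opp, F_cont; solve_abs. }
  pose proof (Rmin_l (Rmin dp dn) (Rmin (r - Rabs u0) (r - Rabs v0))).
  pose proof (Rmin_r (Rmin dp dn) (Rmin (r - Rabs u0) (r - Rabs v0))).
  pose proof (Rmin_l dp dn); pose proof (Rmin_r dp dn).
  pose proof (Rmin_l (r - Rabs u0) (r - Rabs v0)); pose proof (Rmin_r (r - Rabs u0) (r - Rabs v0)).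
  set (d := Rmin (Rmin dp dn) (Rmin (r - Rabs u0) (r - Rabs v0))) in *.
  exists d; split; [unfold d; repeat apply Rmin_pos; lra|].
  intros u v hu hv.
  assert (at_top : 0 < F u v (y0 + e)) by (apply Hp; lra).
  assert (at_bottom : 0 < - F u v (y0 - e)) by (apply Hn; lra).
  destruct (root_in_y_between u v (y0 - e) (y0 + e)) as [y [hy Ey]]; try solve_abs.
  exists y; split; auto; solve_abs.
Qed.

Lemma root_in_y_continuous (Y : R -> R -> R) d : d <= r ->
  (forall u v, Rabs u < d -> Rabs v < d -> Rabs (Y u v) < r /\ F u v (Y u v) = 0) ->
  forall u0 v0, Rabs u0 < d -> Rabs v0 < d -> cont2_at Y u0 v0.
Proof.
  intros hdr HY u0 v0 hu0 hv0 e he.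
  destruct (HY u0 v0 hu0 hv0) as [hY0 EY0].
  pose proof (Rmin_l e (r - Rabs (Y u0 v0))); pose proof (Rmin_r e (r - Rabs (Y u0 v0))).
  set (e' := Rmin e (r - Rabs (Y u0 v0))) in *.
  assert (he' : 0 < e') by (apply Rmin_pos; lra).
  destruct (root_in_y_persists u0 v0 (Y u0 v0) e') as [dl [hdl Hdl]]; try lra.
  pose proof (Rmin_l dl (Rmin (d - Rabs u0) (d - Rabs v0)));
  pose proof (Rmin_r dl (Rmin (d - Rabs u0) (d - Rabs v0)));
  pose proof (Rmin_l (d - Rabs u0) (d - Rabs v0)); pose proof (Rmin_r (d - Rabs u0) (d - Rabs v0)).
  set (m := Rmin dl (Rmin (d - Rabs u0) (d - Rabs v0))) in *.
  exists m; split; [unfold m; repeat apply Rmin_pos; lra|].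
  intros u v hu hv.
  destruct (Hdl u v) as [y [hy Ey]]; try lra.
  pose proof (Rabs_bounds u0); pose proof (Rabs_bounds v0); pose proof (Rabs_bounds (Y u0 v0)).
  assert (hu' : Rabs u < d) by solve_abs. assert (hv' : Rabs v < d) by solve_abs.
  destruct (HY u v hu' hv') as [hY EY].
  (* the root found near [Y u0 v0] is [Y u v] *)
  rewrite <- (root_in_y_unique u v y (Y u v)); solve_abs.
Qed.

End IncreasingInY.

Record implicit_root (F Fy : R -> R -> R -> R) (d r : R) (Y : R -> R -> R) : Prop := {
  implicit_root_radius : 0 < d <= r;
  implicit_root_origin : Y 0 0 = 0;
  implicit_root_bound : forall u v, Rabs u < d -> Rabs v < d -> Rabs (Y u v) < r;
  implicit_root_eq : forall u v, Rabs u < d -> Rabs v < d -> F u v (Y u v) = 0;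
  implicit_root_cont : forall u v, Rabs u < d -> Rabs v < d -> cont2_at Y u v;
  implicit_root_unique : forall u v y, Rabs u < d -> Rabs v < d -> Rabs y <= r ->
    F u v y = 0 -> y = Y u v;
  implicit_root_nondeg : forall u v y, Rabs u < d -> Rabs v < d -> Rabs y <= r ->
    Fy u v y <> 0 }.

Lemma implicit_function_pos (F Fy : R -> R -> R -> R) rho :
  0 < rho ->
  (forall u v y, Rabs u < rho -> Rabs v < rho -> Rabs y < rho ->
     derivable_pt_lim (fun t => F u v t) y (Fy u v y)) ->
  (forall u v y, Rabs u < rho -> Rabs v < rho -> Rabs y < rho -> cont3_at F u v y) ->
  cont3_at Fy 0 0 0 -> F 0 0 0 = 0 -> 0 < Fy 0 0 0 ->
  exists d r Y, r < rho /\ implicit_root F Fy d r Y.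
Proof.
  intros hrho DF CF CFy F0 Fy0.
  destruct (CFy (Fy 0 0 0 / 2)) as [d1 [hd1 H1]]; [lra|].
  set (r := Rmin d1 rho / 2).
  pose proof (Rmin_l d1 rho); pose proof (Rmin_r d1 rho); pose proof (Rmin_pos d1 rho hd1 hrho).
  assert (hr : 0 < r /\ r < d1 /\ r < rho) by (unfold r; lra).
  assert (F_dy : forall u v y, Rabs u <= r -> Rabs v <= r -> Rabs y <= r ->
    derivable_pt_lim (fun t => F u v t) y (Fy u v y)) by (intros; apply DF; lra).
  assert (Fy_pos : forall u v y, Rabs u <= r -> Rabs v <= r -> Rabs y <= r -> 0 < Fy u v y).
  { intros u v y hu hv hy.
    assert (Rabs (Fy u v y - Fy 0 0 0) < Fy 0 0 0 / 2) by (apply H1; rewrite !Rminus_0_r; lra).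
    solve_abs. }
  assert (F_cont : forall u v y, Rabs u <= r -> Rabs v <= r -> Rabs y <= r -> cont3_at F u v y)
    by (intros; apply CF; lra).
  destruct (root_in_y_persists F Fy r F_dy Fy_pos F_cont 0 0 0 r) as [d0 [hd0 Hd0]];
    rewrite ?Rabs_R0; try lra.
  pose proof (Rmin_l d0 r); pose proof (Rmin_r d0 r).
  set (d := Rmin d0 r) in *.
  assert (hd : 0 < d) by (apply Rmin_pos; lra).
  set (Y := fun u v => epsilon (inhabits 0) (fun y => Rabs y < r /\ F u v y = 0)).
  assert (HY : forall u v, Rabs u < d -> Rabs v < d -> Rabs (Y u v) < r /\ F u v (Y u v) = 0).
  { intros u v hu hv. apply epsilon_spec.
    destruct (Hd0 u v) as [y [hy Ey]]; rewrite ?Rminus_0_r; try lra.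
    exists y; rewrite Rminus_0_r in hy; auto. }
  assert (uniq : forall u v y, Rabs u < d -> Rabs v < d -> Rabs y <= r -> F u v y = 0 -> y = Y u v).
  { intros u v y hu hv hy Ey. destruct (HY u v hu hv) as [hY EY].
    apply (root_in_y_unique F Fy r F_dy Fy_pos u v); lra. }
  exists d, r, Y; split; [lra|]. constructor.
  - lra.
  - symmetry; apply uniq; rewrite ?Rabs_R0; lra.
  - apply HY.
  - apply HY.
  - apply (root_in_y_continuous F Fy r F_dy Fy_pos F_cont Y d); auto; lra.
  - exact uniq.
  - intros u v y hu hv hy. apply Rgt_not_eq, Fy_pos; lra.
Qed.

Lemma implicit_root_opp F Fy d r Y :
  implicit_root (fun u v y => - F u v y) (fun u v y => - Fy u v y) d r Y ->
  implicit_root F Fy d r Y.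
Proof.
  intros [hd Y0 Hb Heq Hc Hu Hn]; constructor; auto.
  - intros u v hu hv. specialize (Heq u v hu hv). lra.
  - intros u v y hu hv hy E. apply Hu; auto. rewrite E; ring.
  - intros u v y hu hv hy E. apply (Hn u v y); auto. rewrite E; ring.
Qed.

Lemma implicit_function (F Fy : R -> R -> R -> R) rho :
  0 < rho ->
  (forall u v y, Rabs u < rho -> Rabs v < rho -> Rabs y < rho ->
     derivable_pt_lim (fun t => F u v t) y (Fy u v y)) ->
  (forall u v y, Rabs u < rho -> Rabs v < rho -> Rabs y < rho -> cont3_at F u v y) ->
  cont3_at Fy 0 0 0 -> F 0 0 0 = 0 -> Fy 0 0 0 <> 0 ->
  exists d r Y, r < rho /\ implicit_root F Fy d r Y.
Proof.
  intros hrho DF CF CFy F0 Fy0.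
  destruct (Rlt_or_le 0 (Fy 0 0 0)) as [pos|neg]; [apply implicit_function_pos; auto|].
  destruct (implicit_function_pos (fun u v y => - F u v y) (fun u v y => - Fy u v y) rho)
    as (d & r & Y & hr & HY); auto.
  - intros. apply (derivable_pt_lim_opp (fun t => F u v t)); auto.
  - intros. apply cont3_at_opp; auto.
  - apply cont3_at_opp; auto.
  - lra.
  - lra.
  - exists d, r, Y; split; auto. apply implicit_root_opp; auto.
Qed.

Lemma implicit_root_swap F Fy d r Y :
  implicit_root F Fy d r Y ->
  implicit_root (fun u v y => F v u y) (fun u v y => Fy v u y) d r (fun u v => Y v u).
Proof.
  intros [hd Y0 Hb Heq Hc Hu Hn]; constructor; auto; intros.
  apply cont2_at_swap; auto.
Qed.

Lemma implicit_root_dx (F Fy Fu : R -> R -> R -> R) d r rho (Y : R -> R -> R) u v :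
  r < rho -> implicit_root F Fy d r Y ->
  (forall u v y, Rabs u < rho -> Rabs v < rho -> Rabs y < rho ->
     derivable_pt_lim (fun t => F u v t) y (Fy u v y)) ->
  (forall u v y, Rabs u < rho -> Rabs v < rho -> Rabs y < rho ->
     derivable_pt_lim (fun t => F t v y) u (Fu u v y)) ->
  Rabs u < d -> Rabs v < d -> cont3_at Fu u v (Y u v) -> cont3_at Fy u v (Y u v) ->
  derivable_pt_lim (fun t => Y t v) u (- Fu u v (Y u v) / Fy u v (Y u v)).
Proof.
  intros hr HY DFy DFu hu hv CFu CFy.
  destruct HY as [[hd hdr] _ Hb Heq Hc _ Hn].
  set (d0 := d - Rabs u).
  assert (hd0 : 0 < d0) by (unfold d0; lra).
  assert (near : forall h, Rabs h < d0 -> Rabs (u + h) < d).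
  { intros h hh. pose proof (Rabs_triang u h). unfold d0 in hh. lra. }
  destruct (choice_near (0, 0) (fun h => Rabs h < d0) (fun h c =>
      Rmin u (u + h) <= fst c <= Rmax u (u + h) /\
      Rmin (Y u v) (Y (u + h) v) <= snd c <= Rmax (Y u v) (Y (u + h) v) /\
      F (u + h) v (Y (u + h) v) - F u v (Y u v) =
        Fu (fst c) v (Y (u + h) v) * (u + h - u) + Fy u v (snd c) * (Y (u + h) v - Y u v)))
    as [c Hc'].
  { intros h hh. pose proof (near h hh).
    pose proof (Hb u v hu hv); pose proof (Hb (u + h) v (near h hh) hv).
    destruct (mean_value2 (fun s y => F s v y) (fun s y => Fu s v y) (fun s y => Fy s v y)
                u (Y u v) (u + h) (Y (u + h) v)) as (xi & eta & hxi & heta & E).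
    - intros x hx. pose proof (between_bound u (u + h) x d hx hu (near h hh)).
      apply DFu; solve_abs.
    - intros y hy. pose proof (between_bound _ _ y r hy ltac:(eauto) ltac:(eauto)).
      apply DFy; solve_abs.
    - exists (xi, eta); auto. }
  assert (Fy_eta : forall h, Rabs h < d0 -> Fy u v (snd (c h)) <> 0).
  { intros h hh. destruct (Hc' h hh) as (_ & heta & _).
    apply Hn; auto. apply Rlt_le, (between_bound _ _ _ r heta); apply Hb; auto. }
  apply derivable_pt_lim_iff_lim_at0.
  apply (lim_at0_ext_near (fun h => - Fu (fst (c h)) v (Y (u + h) v) / Fy u v (snd (c h))) _ _ d0 hd0).
  { intros h h0 hh. destruct (Hc' h hh) as (_ & _ & E). pose proof (Fy_eta h hh).
    rewrite !Heq in E by auto. replace (u + h - u) with h in E by ring.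
    field_simplify_eq; auto. lra. }
  apply (lim_at0_comp2 (fun a b => - a / b)).
  - apply cont2_at_div; [apply cont2_at_opp, cont2_at_fst|apply cont2_at_snd|].
    apply Hn; auto. apply Rlt_le, Hb; auto.
  - apply (lim_at0_comp3 Fu (fun h => fst (c h)) (fun _ => v) (fun h => Y (u + h) v)); auto.
    + apply (lim_at0_squeeze _ (fun h => u + h) _ d0 hd0); [|apply lim_at0_shift].
      intros h _ hh. apply between_abs, (Hc' h hh).
    + apply lim_at0_const.
    + apply lim_at0_comp2; [apply Hc; auto|apply lim_at0_shift|apply lim_at0_const].
  - apply (lim_at0_comp3 Fy (fun _ => u) (fun _ => v) (fun h => snd (c h))); auto;
      try apply lim_at0_const.
    apply (lim_at0_squeeze _ (fun h => Y (u + h) v) _ d0 hd0).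
    + intros h _ hh. apply between_abs, (Hc' h hh).
    + apply (lim_at0_comp2 Y (fun h => u + h) (fun _ => v));
        [apply Hc; auto|apply lim_at0_shift|apply lim_at0_const].
Qed.

Definition C1_ball (d : R) (u du : R -> R) : Prop :=
  forall e, Rabs e < d -> derivable_pt_lim u e (du e) /\ continuity_pt du e.

Lemma C1_ball_continuity d u du e : C1_ball d u du -> Rabs e < d -> continuity_pt u e.
Proof. intros C he; apply derivable_continuous_pt; exists (du e); apply C; auto. Qed.

Lemma C1_ball_small d u du r : C1_ball d u du -> 0 < d -> u 0 = 0 -> 0 < r ->
  exists d', 0 < d' <= d /\ forall e, Rabs e < d' -> Rabs (u e) < r.
Proof.
  intros C hd u0 hr.
  assert (Cu : continuity_pt u 0) by (apply (C1_ball_continuity d _ du); rewrite ?Rabs_R0; auto).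
  destruct (Cu r hr) as [d' [hd' Hd]]. exists (Rmin d' d).
  split; [split; [apply Rmin_pos; auto|apply Rmin_r]|].
  intros e he. pose proof (Rmin_l d' d).
  destruct (Req_dec e 0) as [->|ne]; [rewrite u0, Rabs_R0; auto|].
  replace (u e) with (u e - u 0) by (rewrite u0; ring).
  apply (Hd e). split; [split; [exact I|auto]|]. simpl; unfold R_dist; rewrite Rminus_0_r; lra.
Qed.

Lemma C1_near0_of_ball d d' u du : d' < d -> C1_ball d u du -> C1_near0 d' u du.
Proof. intros hd C e he; apply C; lra. Qed.

Lemma implicit_function1 (G Gx Ge : R -> R -> R) rho :
  0 < rho ->
  (forall x e, Rabs x < rho -> Rabs e < rho -> derivable_pt_lim (fun t => G t e) x (Gx x e)) ->
  (forall x e, Rabs x < rho -> Rabs e < rho -> derivable_pt_lim (fun t => G x t) e (Ge x e)) ->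
  (forall x e, Rabs x < rho -> Rabs e < rho ->
     cont2_at G x e /\ cont2_at Gx x e /\ cont2_at Ge x e) ->
  G 0 0 = 0 -> Gx 0 0 <> 0 ->
  exists d r A, r < rho /\ 0 < d <= r /\ A 0 = 0 /\
    (forall e, Rabs e < d -> Rabs (A e) < r /\ G (A e) e = 0) /\
    (forall e x, Rabs e < d -> Rabs x <= r -> G x e = 0 -> x = A e) /\
    C1_ball d A (fun t => - Ge (A t) t / Gx (A t) t).
Proof.
  intros hrho DGx DGe CG G0 Gx0.
  destruct (implicit_function (fun e _ x => G x e) (fun e _ x => Gx x e) rho)
    as (d & r & Y & hr & HY); auto.
  - intros e v x he hv hx. apply cont3_at_of_cont2_at, CG; auto.
  - apply cont3_at_of_cont2_at, CG; rewrite Rabs_R0; auto.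
  - pose proof HY as [[hd hdr] Y0 Hb Heq Hc Hu Hn].
    assert (h0 : Rabs 0 < d) by (rewrite Rabs_R0; auto).
    exists d, r, (fun e => Y e 0).
    split; [|split; [|split; [|split; [|split]]]]; auto.
    intros e he.
    assert (he' : Rabs e < rho) by lra.
    assert (hA : Rabs (Y e 0) < rho) by (pose proof (Hb e 0 he h0); lra).
    assert (DA : derivable_pt_lim (fun t => Y t 0) e (- Ge (Y e 0) e / Gx (Y e 0) e)).
    { apply (implicit_root_dx (fun e _ x => G x e) (fun e _ x => Gx x e) (fun e _ x => Ge x e)
               d r rho Y e 0); auto.
      all: try (intros; apply DGx; auto); try (intros; apply DGe; auto).
      all: apply cont3_at_of_cont2_at, CG; auto. }
    split; auto.
    apply (continuity_pt_comp_diag (fun x e => - Ge x e / Gx x e) (fun t => Y t 0)).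
    + apply cont2_at_div; [apply cont2_at_opp|..]; try apply CG; auto. apply (Hn e 0); auto. apply Rlt_le, Hb; auto.
    + apply derivable_continuous_pt. exists (- Ge (Y e 0) e / Gx (Y e 0) e); auto.
Qed.

Lemma level_curve_exists (H Hx Hy He : R -> R -> R -> R) :
  cont3 H -> cont3 Hx -> cont3 Hy -> cont3 He ->
  is_dx3 H Hx -> is_dy3 H Hy -> is_dz3 H He -> H 0 0 0 = 0 -> Hy 0 0 0 <> 0 ->
  exists d r phi, implicit_root (fun x e y => H x y e) (fun x e y => Hy x y e) d r phi /\
    (forall x e, Rabs x < d -> Rabs e < d ->
       derivable_pt_lim (fun t => phi t e) x (- Hx x (phi x e) e / Hy x (phi x e) e)) /\
    (forall x e, Rabs x < d -> Rabs e < d ->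
       derivable_pt_lim (fun t => phi x t) e (- He x (phi x e) e / Hy x (phi x e) e)).
Proof.
  intros cH cHx cHy cHe dHx dHy dHe H0 Hy0.
  unfold is_dx3, is_dy3, is_dz3 in *.
  destruct (implicit_function (fun x e y => H x y e) (fun x e y => Hy x y e) 1)
    as (d & r & phi & hr & Hphi); try lra; try (intros; apply dHy);
    try (intros; apply cont3_at_swap23; auto); auto.
  exists d, r, phi; split; [auto|split]; intros x e hx he.
  - apply (implicit_root_dx _ _ (fun x e y => Hx x y e) d r 1 phi x e hr Hphi); auto;
      try (intros; apply dHx); apply cont3_at_swap23; auto.
  - apply (implicit_root_dx (fun e x y => H x y e) (fun e x y => Hy x y e) (fun e x y => He x y e)
             d r 1 (fun e x => phi x e) e x hr); auto;
      try (intros; apply dHe); try apply cont3_at_rotate; auto.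
    apply (implicit_root_swap (fun x e y => H x y e)); auto.
Qed.

Lemma is_dx2_unique (f g1 g2 : R -> R -> R) : is_dx2 f g1 -> is_dx2 f g2 -> g1 = g2.
Proof.
  intros D1 D2. do 2 (apply functional_extensionality; intro). eapply uniqueness_limite; eauto.
Qed.

Lemma is_dy2_unique (f g1 g2 : R -> R -> R) : is_dy2 f g1 -> is_dy2 f g2 -> g1 = g2.
Proof.
  intros D1 D2. do 2 (apply functional_extensionality; intro). eapply uniqueness_limite; eauto.
Qed.

Lemma is_dx3_unique (f g1 g2 : R -> R -> R -> R) : is_dx3 f g1 -> is_dx3 f g2 -> g1 = g2.
Proof.
  intros D1 D2. do 3 (apply functional_extensionality; intro). eapply uniqueness_limite; eauto.
Qed.

Lemma is_dy3_unique (f g1 g2 : R -> R -> R -> R) : is_dy3 f g1 -> is_dy3 f g2 -> g1 = g2.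
Proof.
  intros D1 D2. do 3 (apply functional_extensionality; intro). eapply uniqueness_limite; eauto.
Qed.

Lemma is_dz3_unique (f g1 g2 : R -> R -> R -> R) : is_dz3 f g1 -> is_dz3 f g2 -> g1 = g2.
Proof.
  intros D1 D2. do 3 (apply functional_extensionality; intro). eapply uniqueness_limite; eauto.
Qed.

Lemma C2_2_cont_partials f fx fy : C2_2 f -> is_dx2 f fx -> is_dy2 f fy ->
  cont2 f /\ cont2 fx /\ cont2 fy.
Proof.
  intros (cf & fx' & fy' & dfx' & dfy' & [cfx _] & [cfy _]) dfx dfy.
  rewrite <- (is_dx2_unique _ _ _ dfx' dfx), <- (is_dy2_unique _ _ _ dfy' dfy); auto.
Qed.

Lemma C2_3_cont_partials H Hx Hy He : C2_3 H -> is_dx3 H Hx -> is_dy3 H Hy -> is_dz3 H He ->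
  cont3 H /\ C1_3 Hx /\ C1_3 Hy /\ cont3 He.
Proof.
  intros (cH & Hx' & Hy' & He' & dHx' & dHy' & dHe' & C1x & C1y & [cHe _]) dHx dHy dHe.
  rewrite <- (is_dx3_unique _ _ _ dHx' dHx), <- (is_dy3_unique _ _ _ dHy' dHy),
    <- (is_dz3_unique _ _ _ dHe' dHe); auto.
Qed.

Lemma parallel_iff_cross (f g f' g' l : R) : g' <> 0 ->
  (f - l * f' = 0 /\ g - l * g' = 0 <-> f * g' - g * f' = 0 /\ l = g / g').
Proof.
  intros hg. split.
  - intros [E1 E2]. split; [|field_simplify_eq; auto]; nra.
  - intros [E ->]. split; field_simplify_eq; auto; lra.
Qed.

(** * The switching curve *)

Section SwitchingCurve.

Variables (fp gp fm gm : R -> R -> R) (H : R -> R -> R -> R).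
Variables (fpx fpy gpx gpy fmx fmy gmx gmy : R -> R -> R).
Variables (Hx Hy He Hxx Hxy Hxe Hyx Hyy Hye : R -> R -> R -> R).

Hypotheses (dfpx : is_dx2 fp fpx) (dfpy : is_dy2 fp fpy) (dgpx : is_dx2 gp gpx) (dgpy : is_dy2 gp gpy)
  (dfmx : is_dx2 fm fmx) (dfmy : is_dy2 fm fmy) (dgmx : is_dx2 gm gmx) (dgmy : is_dy2 gm gmy).
Hypotheses (dHxx : is_dx3 Hx Hxx) (dHxy : is_dy3 Hx Hxy) (dHxe : is_dz3 Hx Hxe)
  (dHyx : is_dx3 Hy Hyx) (dHyy : is_dy3 Hy Hyy) (dHye : is_dz3 Hy Hye).
Hypotheses (cfp : cont2 fp) (cgp : cont2 gp) (cfm : cont2 fm) (cgm : cont2 gm)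
  (cfpx : cont2 fpx) (cfpy : cont2 fpy) (cgpx : cont2 gpx) (cgpy : cont2 gpy)
  (cfmx : cont2 fmx) (cfmy : cont2 fmy) (cgmx : cont2 gmx) (cgmy : cont2 gmy).
Hypotheses (cHx : cont3 Hx) (cHy : cont3 Hy) (cHe : cont3 He)
  (cHxx : cont3 Hxx) (cHxy : cont3 Hxy) (cHxe : cont3 Hxe)
  (cHyx : cont3 Hyx) (cHyy : cont3 Hyy) (cHye : cont3 Hye).
Hypotheses (fm0 : fm 0 0 = 0) (gm0 : gm 0 0 = 0) (Hx0 : Hx 0 0 0 = 0) (Hy0 : Hy 0 0 0 <> 0).

(* [phi] parametrises the switching curve [H = 0] near the origin as [y = phi x eps]. *)
Variables (d1 r1 : R) (phi : R -> R -> R).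

Definition phix x e := - Hx x (phi x e) e / Hy x (phi x e) e.
Definition phie x e := - He x (phi x e) e / Hy x (phi x e) e.

Hypothesis phi_root : implicit_root (fun x e y => H x y e) (fun x e y => Hy x y e) d1 r1 phi.
Hypothesis phi_dx : forall x e, Rabs x < d1 -> Rabs e < d1 ->
  derivable_pt_lim (fun t => phi t e) x (phix x e).
Hypothesis phi_de : forall x e, Rabs x < d1 -> Rabs e < d1 ->
  derivable_pt_lim (fun t => phi x t) e (phie x e).

Lemma d1_pos : 0 < d1.
Proof. apply (implicit_root_radius _ _ _ _ _ phi_root). Qed.

Lemma phi_cont x e : Rabs x < d1 -> Rabs e < d1 -> cont2_at phi x e.
Proof. apply (implicit_root_cont _ _ _ _ _ phi_root). Qed.

Lemma phi_Hy x e : Rabs x < d1 -> Rabs e < d1 -> Hy x (phi x e) e <> 0.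
Proof.
  intros hx he. apply (implicit_root_nondeg _ _ _ _ _ phi_root); auto.
  apply Rlt_le, (implicit_root_bound _ _ _ _ _ phi_root); auto.
Qed.

Lemma phix_cont x e : Rabs x < d1 -> Rabs e < d1 -> cont2_at phix x e.
Proof.
  intros hx he. apply cont2_at_div; [..|apply phi_Hy; auto];
    cont2_at_auto ltac:(apply phi_cont; assumption).
Qed.

Lemma phie_cont x e : Rabs x < d1 -> Rabs e < d1 -> cont2_at phie x e.
Proof.
  intros hx he. apply cont2_at_div; [..|apply phi_Hy; auto];
    cont2_at_auto ltac:(apply phi_cont; assumption).
Qed.

Ltac curve_cont :=
  cont2_at_auto ltac:(first [apply phi_cont | apply phix_cont | apply phie_cont]; assumption).

Lemma phi_origin : phi 0 0 = 0.
Proof. apply (implicit_root_origin _ _ _ _ _ phi_root). Qed.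

Lemma phix_origin : phix 0 0 = 0.
Proof. unfold phix. rewrite phi_origin, Hx0. field; auto. Qed.

Lemma phie_origin : phie 0 0 = - He 0 0 0 / Hy 0 0 0.
Proof. unfold phie. rewrite phi_origin; auto. Qed.

Lemma along_curve_dx (k kx ky : R -> R -> R) x e :
  (forall a b, derivable_pt_lim (fun s => k s b) a (kx a b)) ->
  (forall a b, derivable_pt_lim (fun s => k a s) b (ky a b)) ->
  cont2 kx -> cont2 ky -> Rabs x < d1 -> Rabs e < d1 ->
  derivable_pt_lim (fun t => k t (phi t e)) x (kx x (phi x e) + ky x (phi x e) * phix x e).
Proof.
  intros Dx Dy Cx Cy hx he. eapply derivable_pt_lim_eq_value.
  - apply (derivable_pt_lim_comp2_global k kx ky (fun t => t) (fun t => phi t e)); auto.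
    apply derivable_pt_lim_id.
  - cbv beta; ring.
Qed.

Lemma along_curve_de2 (k kx ky : R -> R -> R) x e :
  (forall a b, derivable_pt_lim (fun s => k s b) a (kx a b)) ->
  (forall a b, derivable_pt_lim (fun s => k a s) b (ky a b)) ->
  cont2 kx -> cont2 ky -> Rabs x < d1 -> Rabs e < d1 ->
  derivable_pt_lim (fun t => k x (phi x t)) e (ky x (phi x e) * phie x e).
Proof.
  intros Dx Dy Cx Cy hx he. eapply derivable_pt_lim_eq_value.
  - apply (derivable_pt_lim_comp2_global k kx ky (fun _ => x) (fun t => phi x t)); auto.
    apply derivable_pt_lim_const.
  - cbv beta; ring.
Qed.

Lemma along_curve_de3 (k ky ke : R -> R -> R -> R) x e :
  is_dy3 k ky -> is_dz3 k ke -> cont3 ky -> cont3 ke -> Rabs x < d1 -> Rabs e < d1 ->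
  derivable_pt_lim (fun t => k x (phi x t) t) e (ky x (phi x e) e * phie x e + ke x (phi x e) e).
Proof.
  intros Dy Dz Cy Cz hx he. eapply derivable_pt_lim_eq_value.
  - apply (derivable_pt_lim_comp2_global (fun b c => k x b c) (fun b c => ky x b c)
             (fun b c => ke x b c) (fun t => phi x t) (fun t => t));
      try (intros; apply Dy); try (intros; apply Dz); try (apply cont2_fix1; auto); auto.
    apply derivable_pt_lim_id.
  - cbv beta; ring.
Qed.

Lemma zero_along_curve (G Gx Ge : R -> R -> R) :
  (forall x e, Rabs x < d1 -> Rabs e < d1 -> derivable_pt_lim (fun t => G t e) x (Gx x e)) ->
  (forall x e, Rabs x < d1 -> Rabs e < d1 -> derivable_pt_lim (fun t => G x t) e (Ge x e)) ->
  (forall x e, Rabs x < d1 -> Rabs e < d1 ->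
     cont2_at G x e /\ cont2_at Gx x e /\ cont2_at Ge x e) ->
  G 0 0 = 0 -> Gx 0 0 <> 0 ->
  exists d r (A dA dB : R -> R), 0 < d <= r /\ r < d1 /\ A 0 = 0 /\
    (forall e, Rabs e < d -> Rabs (A e) < r /\ G (A e) e = 0) /\
    (forall e x, Rabs e < d -> Rabs x <= r -> G x e = 0 -> x = A e) /\
    C1_ball d A dA /\ C1_ball d (fun t => phi (A t) t) dB /\
    dA 0 = - Ge 0 0 / Gx 0 0 /\ dB 0 = - He 0 0 0 / Hy 0 0 0.
Proof.
  intros DGx DGe CG G0 Gx0.
  destruct (implicit_function1 G Gx Ge d1 d1_pos DGx DGe CG G0 Gx0)
    as (d & r & A & hr & [hd hdr] & A0 & HA & UA & CA).
  set (dA := fun t => - Ge (A t) t / Gx (A t) t) in CA.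
  exists d, r, A, dA, (fun t => phix (A t) t * dA t + phie (A t) t).
  do 6 (split; [auto; lra|]).
  split; [|split].
  - intros e he. destruct (CA e he) as [DA CdA].
    assert (hAe : Rabs (A e) < d1) by (pose proof (proj1 (HA e he)); lra).
    assert (CAe := C1_ball_continuity _ _ _ e CA he).
    split.
    + pose proof (Rmin_l (d1 - Rabs (A e)) (d1 - Rabs e));
      pose proof (Rmin_r (d1 - Rabs (A e)) (d1 - Rabs e)).
      set (rr := Rmin (d1 - Rabs (A e)) (d1 - Rabs e)) in *.
      assert (hrr : 0 < rr) by (apply Rmin_pos; lra).
      pose proof (Rabs_bounds (A e)); pose proof (Rabs_bounds e).
      eapply derivable_pt_lim_eq_value.
      { apply (derivable_pt_lim_comp2 phi phix phie A (fun t => t) (dA e) 1 e rr hrr DA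
                 (derivable_pt_lim_id e)).
        - intros a b ha hb; apply phi_dx; solve_abs.
        - intros a b ha hb; apply phi_de; solve_abs.
        - apply phix_cont; lra.
        - apply phie_cont; lra. }
      ring.
    + apply (continuity_pt_of_cont2_at _ e 0).
      apply cont2_at_plus; [apply cont2_at_mult|].
      * apply cont2_at_comp_diag; auto. apply phix_cont; lra.
      * apply cont2_at_of_continuity_pt; auto.
      * apply cont2_at_comp_diag; auto. apply phie_cont; lra.
  - unfold dA; rewrite A0; reflexivity.
  - unfold dA; rewrite A0, phix_origin, phie_origin; ring.
Qed.

(* The derivative of [H] along the flow of [(fm, gm)]. *)
Definition lieH x y e := Hx x y e * fm x y + Hy x y e * gm x y.

Definition lieH_curve x e := lieH x (phi x e) e.

Definition lieH_curve_dx x e :=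
  (Hxx x (phi x e) e + Hxy x (phi x e) e * phix x e) * fm x (phi x e)
  + Hx x (phi x e) e * (fmx x (phi x e) + fmy x (phi x e) * phix x e)
  + ((Hyx x (phi x e) e + Hyy x (phi x e) e * phix x e) * gm x (phi x e)
  + Hy x (phi x e) e * (gmx x (phi x e) + gmy x (phi x e) * phix x e)).

Definition lieH_curve_de x e :=
  (Hxy x (phi x e) e * phie x e + Hxe x (phi x e) e) * fm x (phi x e)
  + Hx x (phi x e) e * (fmy x (phi x e) * phie x e)
  + ((Hyy x (phi x e) e * phie x e + Hye x (phi x e) e) * gm x (phi x e)
  + Hy x (phi x e) e * (gmy x (phi x e) * phie x e)).

Lemma lieH_curve_dx_spec x e : Rabs x < d1 -> Rabs e < d1 ->
  derivable_pt_lim (fun t => lieH_curve t e) x (lieH_curve_dx x e).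
Proof.
  intros hx he. unfold lieH_curve, lieH, lieH_curve_dx.
  eapply derivable_pt_lim_eq_value; [apply derivable_pt_lim_add; apply derivable_pt_lim_mul|].
  - apply (along_curve_dx (fun a b => Hx a b e) (fun a b => Hxx a b e) (fun a b => Hxy a b e));
      try apply cont2_fix3; auto.
  - apply along_curve_dx; auto.
  - apply (along_curve_dx (fun a b => Hy a b e) (fun a b => Hyx a b e) (fun a b => Hyy a b e));
      try apply cont2_fix3; auto.
  - apply along_curve_dx; auto.
  - cbv beta; ring.
Qed.

Lemma lieH_curve_de_spec x e : Rabs x < d1 -> Rabs e < d1 ->
  derivable_pt_lim (fun t => lieH_curve x t) e (lieH_curve_de x e).
Proof.
  intros hx he. unfold lieH_curve, lieH, lieH_curve_de.
  eapply derivable_pt_lim_eq_value; [apply derivable_pt_lim_add; apply derivable_pt_lim_mul|].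
  - apply (along_curve_de3 Hx Hxy Hxe); auto.
  - apply (along_curve_de2 fm fmx); auto.
  - apply (along_curve_de3 Hy Hyy Hye); auto.
  - apply (along_curve_de2 gm gmx); auto.
  - cbv beta; ring.
Qed.

Lemma lieH_curve_cont x e : Rabs x < d1 -> Rabs e < d1 ->
  cont2_at lieH_curve x e /\ cont2_at lieH_curve_dx x e /\ cont2_at lieH_curve_de x e.
Proof. intros; unfold lieH_curve, lieH, lieH_curve_dx, lieH_curve_de; repeat split; curve_cont. Qed.

Lemma lieH_curve_origin : lieH_curve 0 0 = 0.
Proof. unfold lieH_curve, lieH; rewrite phi_origin, Hx0, fm0, gm0; ring. Qed.

Lemma lieH_curve_dx_origin : lieH_curve_dx 0 0 = Hy 0 0 0 * gmx 0 0.
Proof. unfold lieH_curve_dx; rewrite phix_origin, phi_origin, Hx0, fm0, gm0; ring. Qed.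

Lemma lieH_curve_de_origin : lieH_curve_de 0 0 = - He 0 0 0 * gmy 0 0.
Proof. unfold lieH_curve_de; rewrite phie_origin, phi_origin, Hx0, fm0, gm0; field; auto. Qed.

(* Vanishes exactly where [(fm, gm)] and [(fp, gp)] are parallel. *)
Definition cross x y := fm x y * gp x y - gm x y * fp x y.

Definition cross_curve x e := cross x (phi x e).

Definition cross_curve_dx x e :=
  (fmx x (phi x e) + fmy x (phi x e) * phix x e) * gp x (phi x e)
  + fm x (phi x e) * (gpx x (phi x e) + gpy x (phi x e) * phix x e)
  - ((gmx x (phi x e) + gmy x (phi x e) * phix x e) * fp x (phi x e)
  + gm x (phi x e) * (fpx x (phi x e) + fpy x (phi x e) * phix x e)).

Definition cross_curve_de x e :=
  fmy x (phi x e) * phie x e * gp x (phi x e) + fm x (phi x e) * (gpy x (phi x e) * phie x e)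
  - (gmy x (phi x e) * phie x e * fp x (phi x e) + gm x (phi x e) * (fpy x (phi x e) * phie x e)).

Lemma cross_curve_dx_spec x e : Rabs x < d1 -> Rabs e < d1 ->
  derivable_pt_lim (fun t => cross_curve t e) x (cross_curve_dx x e).
Proof.
  intros hx he. unfold cross_curve, cross, cross_curve_dx.
  eapply derivable_pt_lim_eq_value; [apply derivable_pt_lim_sub; apply derivable_pt_lim_mul|].
  all: try (apply along_curve_dx; auto).
  cbv beta; ring.
Qed.

Lemma cross_curve_de_spec x e : Rabs x < d1 -> Rabs e < d1 ->
  derivable_pt_lim (fun t => cross_curve x t) e (cross_curve_de x e).
Proof.
  intros hx he. unfold cross_curve, cross, cross_curve_de.
  eapply derivable_pt_lim_eq_value; [apply derivable_pt_lim_sub; apply derivable_pt_lim_mul|].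
  - apply (along_curve_de2 fm fmx); auto.
  - apply (along_curve_de2 gp gpx); auto.
  - apply (along_curve_de2 gm gmx); auto.
  - apply (along_curve_de2 fp fpx); auto.
  - cbv beta; ring.
Qed.

Lemma cross_curve_cont x e : Rabs x < d1 -> Rabs e < d1 ->
  cont2_at cross_curve x e /\ cont2_at cross_curve_dx x e /\ cont2_at cross_curve_de x e.
Proof. intros; unfold cross_curve, cross, cross_curve_dx, cross_curve_de; repeat split; curve_cont. Qed.

Lemma cross_curve_origin : cross_curve 0 0 = 0.
Proof. unfold cross_curve, cross; rewrite phi_origin, fm0, gm0; ring. Qed.

Lemma cross_curve_dx_origin : cross_curve_dx 0 0 = fmx 0 0 * gp 0 0 - gmx 0 0 * fp 0 0.
Proof. unfold cross_curve_dx; rewrite phix_origin, phi_origin, fm0, gm0; ring. Qed.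

Lemma cross_curve_de_origin :
  cross_curve_de 0 0 = - He 0 0 0 / Hy 0 0 0 * (fmy 0 0 * gp 0 0 - gmy 0 0 * fp 0 0).
Proof. unfold cross_curve_de; rewrite phie_origin, phi_origin, fm0, gm0; ring. Qed.

Lemma tangency_point (gmx0 : gmx 0 0 <> 0) :
  exists r eps0 : R, 0 < r /\ 0 < eps0 /\
  exists (A B dA dB : R -> R),
    (forall eps, 0 < eps <= eps0 ->
       Rabs (A eps) <= r /\ Rabs (B eps) <= r /\
       H (A eps) (B eps) eps = 0 /\
       Hx (A eps) (B eps) eps * fm (A eps) (B eps)
         + Hy (A eps) (B eps) eps * gm (A eps) (B eps) = 0 /\
       (forall x y, Rabs x <= r -> Rabs y <= r ->
          H x y eps = 0 ->
          Hx x y eps * fm x y + Hy x y eps * gm x y = 0 ->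
          x = A eps /\ y = B eps)) /\
    C1_near0 eps0 A dA /\ C1_near0 eps0 B dB /\ A 0 = 0 /\ B 0 = 0 /\
    dA 0 = He 0 0 0 / Hy 0 0 0 * (gmy 0 0 / gmx 0 0) /\
    dB 0 = He 0 0 0 / Hy 0 0 0 * (-1) /\
    (forall eps, 0 < eps <= eps0 ->
       forall x y, Rabs x <= r -> Rabs y <= r -> H x y eps = 0 ->
         ((x, y) <> (A eps, B eps) <->
          (Hx x y eps * fm x y + Hy x y eps * gm x y > 0 \/
           Hx x y eps * fm x y + Hy x y eps * gm x y < 0))).
Proof.
  destruct (zero_along_curve lieH_curve lieH_curve_dx lieH_curve_de lieH_curve_dx_spec
              lieH_curve_de_spec lieH_curve_cont lieH_curve_origin)
    as (d & r & A & dA & dB & [hd hdr] & hr & A0 & HA & UA & CA & CB & dA0 & dB0).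
  { rewrite lieH_curve_dx_origin; apply Rmult_integral_contrapositive; auto. }
  set (B := fun t => phi (A t) t) in CB.
  assert (B0 : B 0 = 0) by (unfold B; rewrite A0; apply phi_origin).
  destruct (C1_ball_small d B dB r CB hd B0) as [dr [[hdr' hdrd] HB]]; [lra|].
  set (eps0 := dr / 2).
  assert (small : forall eps, 0 < eps <= eps0 -> Rabs eps < dr)
    by (intros eps heps; rewrite Rabs_right by lra; unfold eps0 in heps; lra).
  destruct phi_root as [[_ hd1] _ _ Hphi _ Uphi _].
  assert (Uniq : forall eps x y, Rabs eps < d -> Rabs x <= r -> Rabs y <= r ->
            H x y eps = 0 -> lieH x y eps = 0 -> x = A eps /\ y = B eps).
  { intros eps x y he hx hy E1 E2.
    assert (Ey : y = phi x eps) by (apply Uphi; lra).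
    assert (Ex : x = A eps) by (apply UA; auto; unfold lieH_curve; rewrite <- Ey; auto).
    split; auto. unfold B; rewrite <- Ex; auto. }
  exists r, eps0; split; [lra|split; [unfold eps0; lra|]].
  exists A, B, dA, dB.
  split; [|split; [|split; [|split; [|split; [|split; [|split]]]]]].
  - intros eps heps. pose proof (small eps heps) as he.
    destruct (HA eps ltac:(lra)) as [hA EA].
    split; [lra|split; [apply Rlt_le, HB; auto|split; [apply Hphi; lra|split; [exact EA|]]]].
    intros x y; apply Uniq; lra.
  - apply (C1_near0_of_ball d); [unfold eps0; lra|auto].
  - apply (C1_near0_of_ball d); [unfold eps0; lra|auto].
  - exact A0.
  - exact B0.
  - rewrite dA0, lieH_curve_dx_origin, lieH_curve_de_origin; field; auto.
  - rewrite dB0; field; auto.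
  - intros eps heps x y hx hy E. assert (he : Rabs eps < d) by (pose proof (small eps heps); lra).
    split.
    + intros ne. destruct (Rtotal_order (lieH x y eps) 0) as [lt|[eq|gt]]; [right|exfalso|left]; auto.
      apply ne. destruct (Uniq eps x y he hx hy E eq) as [-> ->]; auto.
    + intros sgn eq. injection eq as -> ->.
      destruct (HA eps he) as [_ EA]. unfold lieH_curve, lieH in EA. fold (B eps) in EA.
      destruct sgn; lra.
Qed.

Lemma gm_over_gp_C1 D (a b da db : R -> R) :
  C1_ball D a da -> C1_ball D b db -> (forall e, Rabs e < D -> gp (a e) (b e) <> 0) ->
  C1_ball D (fun t => gm (a t) (b t) / gp (a t) (b t))
    (fun t => ((gmx (a t) (b t) * da t + gmy (a t) (b t) * db t) * gp (a t) (b t)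
               - (gpx (a t) (b t) * da t + gpy (a t) (b t) * db t) * gm (a t) (b t))
              / (gp (a t) (b t))²).
Proof.
  intros Ca Cb gp_ab e he.
  destruct (Ca e he) as [Da Cda]. destruct (Cb e he) as [Db Cdb].
  pose proof (C1_ball_continuity _ _ _ e Ca he); pose proof (C1_ball_continuity _ _ _ e Cb he).
  split.
  - apply (derivable_pt_lim_quot (fun t => gm (a t) (b t)) (fun t => gp (a t) (b t)));
      [apply (derivable_pt_lim_comp2_global gm gmx gmy a b (da e) (db e)); auto
      |apply (derivable_pt_lim_comp2_global gp gpx gpy a b (da e) (db e)); auto
      |apply gp_ab; auto].
  - apply (continuity_pt_of_cont2_at _ e 0). unfold Rsqr.
    apply cont2_at_div; [..|apply Rmult_integral_contrapositive; split; apply gp_ab; auto];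
      cont2_at_auto ltac:(apply cont2_at_of_continuity_pt; assumption).
Qed.

Lemma pseudo_equilibrium (gp0 : gp 0 0 <> 0)
  (nonpar : fmx 0 0 * gp 0 0 - gmx 0 0 * fp 0 0 <> 0) :
  exists (delta rho : R) (a b lam da db dlam : R -> R),
    0 < delta /\ 0 < rho /\
    a 0 = 0 /\ b 0 = 0 /\ lam 0 = 0 /\
    C1_near0 delta a da /\ C1_near0 delta b db /\ C1_near0 delta lam dlam /\
    (forall eps, Rabs eps <= delta ->
       Rabs (a eps) < rho /\ Rabs (b eps) < rho /\ Rabs (lam eps) < rho /\
       fm (a eps) (b eps) - lam eps * fp (a eps) (b eps) = 0 /\
       gm (a eps) (b eps) - lam eps * gp (a eps) (b eps) = 0 /\
       H (a eps) (b eps) eps = 0) /\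
    (forall eps a' b' l', Rabs eps <= delta ->
       Rabs a' < rho -> Rabs b' < rho -> Rabs l' < rho ->
       fm a' b' - l' * fp a' b' = 0 ->
       gm a' b' - l' * gp a' b' = 0 ->
       H a' b' eps = 0 ->
       a' = a eps /\ b' = b eps /\ l' = lam eps) /\
    da 0 = He 0 0 0 / Hy 0 0 0 *
           ((fmy 0 0 * gp 0 0 - gmy 0 0 * fp 0 0) /
            (fmx 0 0 * gp 0 0 - gmx 0 0 * fp 0 0)) /\
    db 0 = He 0 0 0 / Hy 0 0 0 * (-1) /\
    dlam 0 = He 0 0 0 / Hy 0 0 0 *
           (- ((fmx 0 0 * gmy 0 0 - fmy 0 0 * gmx 0 0) /
               (fmx 0 0 * gp 0 0 - gmx 0 0 * fp 0 0))).
Proof.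
  destruct (zero_along_curve cross_curve cross_curve_dx cross_curve_de cross_curve_dx_spec
              cross_curve_de_spec cross_curve_cont cross_curve_origin)
    as (d & r & a & da & db & [hd hdr] & hr & a0 & Ha & Ua & Ca & Cb & da0 & db0).
  { rewrite cross_curve_dx_origin; auto. }
  set (b := fun t => phi (a t) t) in Cb.
  assert (b0 : b 0 = 0) by (unfold b; rewrite a0; apply phi_origin).
  destruct (cont2_nonzero_near gp cgp gp0) as [dg [hdg gp_nz]].
  pose proof (Rmin_l r dg); pose proof (Rmin_r r dg).
  set (rho := Rmin r dg) in *.
  assert (hrho : 0 < rho) by (apply Rmin_pos; lra).
  destruct (C1_ball_small d a da rho Ca hd a0 hrho) as [dA [[hdA hdAd] Hsa]].
  destruct (C1_ball_small d b db rho Cb hd b0 hrho) as [dB [[hdB hdBd] Hsb]].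
  pose proof (Rmin_l dA dB); pose proof (Rmin_r dA dB).
  set (D := Rmin dA dB) in *.
  assert (hD : 0 < D) by (apply Rmin_pos; lra).
  assert (gp_ab : forall e, Rabs e < D -> gp (a e) (b e) <> 0).
  { intros e he. pose proof (Hsa e ltac:(lra)); pose proof (Hsb e ltac:(lra)).
    apply gp_nz; lra. }
  assert (Clam := gm_over_gp_C1 D a b da db
                    (fun e he => Ca e ltac:(lra)) (fun e he => Cb e ltac:(lra)) gp_ab).
  set (lam := fun t => gm (a t) (b t) / gp (a t) (b t)) in Clam.
  assert (lam0 : lam 0 = 0) by (unfold lam; rewrite a0, b0, gm0; field; auto).
  destruct (C1_ball_small D lam _ rho Clam hD lam0 hrho) as [dl [[hdl hdlD] Hsl]].
  destruct phi_root as [[_ hd1] _ _ Hphi _ Uphi _].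
  eexists (dl / 2), rho, a, b, lam, da, db, _.
  do 5 (split; [auto; lra|]).
  split; [|split; [|split; [|split; [|split; [|split; [|split]]]]]].
  - apply (C1_near0_of_ball d); auto; lra.
  - apply (C1_near0_of_ball d); auto; lra.
  - apply (C1_near0_of_ball D); [lra|exact Clam].
  - intros e he. destruct (Ha e ltac:(lra)) as [hae Ecross].
    assert (P : fm (a e) (b e) - lam e * fp (a e) (b e) = 0 /\
                gm (a e) (b e) - lam e * gp (a e) (b e) = 0).
    { apply parallel_iff_cross; [apply gp_ab; lra|split; [exact Ecross|reflexivity]]. }
    destruct P. repeat split; auto; [apply Hsa|apply Hsb|apply Hsl|apply Hphi]; lra.
  - intros e a' b' l' he ha hb hl E1 E2 E3.
    destruct (proj1 (parallel_iff_cross _ _ _ _ l' (gp_nz a' b' ltac:(lra) ltac:(lra))) (conj E1 E2))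
      as [Ecross El].
    assert (Eb : b' = phi a' e) by (apply Uphi; lra).
    assert (Ea : a' = a e) by (apply Ua; try lra; unfold cross_curve; rewrite <- Eb; auto).
    assert (Eb' : b' = b e) by (unfold b; rewrite <- Ea; auto).
    unfold lam; rewrite <- Ea, <- Eb'; auto.
  - rewrite da0, cross_curve_dx_origin, cross_curve_de_origin; field; auto.
  - rewrite db0; field; auto.
  - cbv beta. unfold Rsqr.
    rewrite a0, b0, gm0, da0, db0, cross_curve_dx_origin, cross_curve_de_origin.
    field; auto.
Qed.

End SwitchingCurve.

Theorem proposition1
  (fp gp fm gm : R -> R -> R) (H : R -> R -> R -> R)
  (fmx fmy gmx gmy : R -> R -> R) (Hx Hy He : R -> R -> R -> R)
  (Cfp : C2_2 fp) (Cgp : C2_2 gp) (Cfm : C2_2 fm) (Cgm : C2_2 gm) (CH : C2_3 H)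
  (dfmx : is_dx2 fm fmx) (dfmy : is_dy2 fm fmy)
  (dgmx : is_dx2 gm gmx) (dgmy : is_dy2 gm gmy)
  (dHx : is_dx3 H Hx) (dHy : is_dy3 H Hy) (dHe : is_dz3 H He)
  (hfm0 : fm 0 0 = 0) (hgm0 : gm 0 0 = 0)
  (hH0 : H 0 0 0 = 0) (hHx0 : Hx 0 0 0 = 0) (hHy0 : Hy 0 0 0 <> 0)
  (hcross : Hy 0 0 0 * gp 0 0 < 0)
  (hgmx0 : gmx 0 0 <> 0)
  (hnonpar : fmx 0 0 * gp 0 0 - gmx 0 0 * fp 0 0 <> 0) :
  exists r eps0 : R, 0 < r /\ 0 < eps0 /\
  exists (A B dA dB : R -> R),
    (forall eps, 0 < eps <= eps0 ->
       Rabs (A eps) <= r /\ Rabs (B eps) <= r /\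
       H (A eps) (B eps) eps = 0 /\
       Hx (A eps) (B eps) eps * fm (A eps) (B eps)
         + Hy (A eps) (B eps) eps * gm (A eps) (B eps) = 0 /\
       (forall x y, Rabs x <= r -> Rabs y <= r ->
          H x y eps = 0 ->
          Hx x y eps * fm x y + Hy x y eps * gm x y = 0 ->
          x = A eps /\ y = B eps)) /\
    C1_near0 eps0 A dA /\ C1_near0 eps0 B dB /\ A 0 = 0 /\ B 0 = 0 /\
    dA 0 = He 0 0 0 / Hy 0 0 0 * (gmy 0 0 / gmx 0 0) /\
    dB 0 = He 0 0 0 / Hy 0 0 0 * (-1) /\
    (forall eps, 0 < eps <= eps0 ->
       forall x y, Rabs x <= r -> Rabs y <= r -> H x y eps = 0 ->
         ((x, y) <> (A eps, B eps) <->
          (Hx x y eps * fm x y + Hy x y eps * gm x y > 0 \/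
           Hx x y eps * fm x y + Hy x y eps * gm x y < 0))) /\
    (exists (delta rho : R) (a b lam da db dlam : R -> R),
       0 < delta /\ 0 < rho /\
       a 0 = 0 /\ b 0 = 0 /\ lam 0 = 0 /\
       C1_near0 delta a da /\ C1_near0 delta b db /\ C1_near0 delta lam dlam /\
       (forall eps, Rabs eps <= delta ->
          Rabs (a eps) < rho /\ Rabs (b eps) < rho /\ Rabs (lam eps) < rho /\
          fm (a eps) (b eps) - lam eps * fp (a eps) (b eps) = 0 /\
          gm (a eps) (b eps) - lam eps * gp (a eps) (b eps) = 0 /\
          H (a eps) (b eps) eps = 0) /\
       (forall eps a' b' l', Rabs eps <= delta ->
          Rabs a' < rho -> Rabs b' < rho -> Rabs l' < rho ->
          fm a' b' - l' * fp a' b' = 0 ->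
          gm a' b' - l' * gp a' b' = 0 ->
          H a' b' eps = 0 ->
          a' = a eps /\ b' = b eps /\ l' = lam eps) /\
       da 0 = He 0 0 0 / Hy 0 0 0 *
              ((fmy 0 0 * gp 0 0 - gmy 0 0 * fp 0 0) /
               (fmx 0 0 * gp 0 0 - gmx 0 0 * fp 0 0)) /\
       db 0 = He 0 0 0 / Hy 0 0 0 * (-1) /\
       dlam 0 = He 0 0 0 / Hy 0 0 0 *
              (- ((fmx 0 0 * gmy 0 0 - fmy 0 0 * gmx 0 0) /
                  (fmx 0 0 * gp 0 0 - gmx 0 0 * fp 0 0)))).
Proof.
  destruct (C2_3_cont_partials H Hx Hy He CH dHx dHy dHe)
    as (cH & (cHx & Hxx & Hxy & Hxe & dHxx & dHxy & dHxe & cHxx & cHxy & cHxe)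
           & (cHy & Hyx & Hyy & Hye & dHyx & dHyy & dHye & cHyx & cHyy & cHye) & cHe).
  destruct (C2_2_cont_partials fm fmx fmy Cfm dfmx dfmy) as (cfm & cfmx & cfmy).
  destruct (C2_2_cont_partials gm gmx gmy Cgm dgmx dgmy) as (cgm & cgmx & cgmy).
  destruct Cfp as (cfp & fpx & fpy & dfpx & dfpy & [cfpx _] & [cfpy _]).
  destruct Cgp as (cgp & gpx & gpy & dgpx & dgpy & [cgpx _] & [cgpy _]).
  destruct (level_curve_exists H Hx Hy He cH cHx cHy cHe dHx dHy dHe hH0 hHy0)
    as (d1 & r1 & phi & Hphi & Hphi_dx & Hphi_de).
  assert (hgp0 : gp 0 0 <> 0) by (intro z; rewrite z, Rmult_0_r in hcross; lra).
  destruct (tangency_point fm gm H fmx fmy gmx gmy Hx Hy He Hxx Hxy Hxe Hyx Hyy Hye)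
    with (d1 := d1) (r1 := r1) (phi := phi)
    as (r & eps0 & hr & heps0 & A & B & dA & dB & P1 & P2 & P3 & P4 & P5 & P6 & P7 & P8); auto.
  exists r, eps0; split; [exact hr|split; [exact heps0|]].
  exists A, B, dA, dB.
  do 8 (split; [assumption|]).
  apply (pseudo_equilibrium fp gp fm gm H fpx fpy gpx gpy fmx fmy gmx gmy Hx Hy He)
    with (d1 := d1) (r1 := r1) (phi := phi); auto.
Qed.
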